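(* Let $G$ be a circulant graph with an odd number of vertices and let $n \ge 1$. Then $K_{n,n} \otimes G$ is a circulant graph.
   Context: Graphs have no multiple edges but may have loops. The tensor product $G \otimes H$ of graphs $G$ and $H$ has vertex set $V(G)\times V(H)$, with $(g,h)$ adjacent to $(g',h')$ if and only if $g$ is adjacent to $g'$ in $G$ and $h$ is adjacent to $h'$ in $H$. $K_{n,n}$ denotes the complete bipartite graph with both parts of size $n$. For an integer $N\ge 1$ and a set $S$ of integers, the circulant graph $C_NS$ has vertex set $\{0,1,\dots,N-1\}$, with $i$ adjacent to $j$ if and only if $i-j \equiv \pm s \pmod N$ for some $s\in S$. A graph is circulant if it is isomorphic to some $C_NS$ (this includes disconnected graphs); equivalently, if it has an automorphism that permutes all its vertices in a single cycle. *)

From mathcomp Require Import all_boot all_order all_algebra.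
Set Implicit Arguments. Unset Strict Implicit. Unset Printing Implicit Defensive.
Import GRing.Theory Num.Theory.

(* A graph (no multiple edges, loops allowed) on a finite vertex type V is an
   adjacency relation E : V -> V -> Prop. *)

Definition tensor (V W : finType) (E : V -> V -> Prop) (F : W -> W -> Prop)
  : (V * W)%type -> (V * W)%type -> Prop :=
  fun p q => E p.1 q.1 /\ F p.2 q.2.

Definition Knn (n : nat) : ('I_n + 'I_n)%type -> ('I_n + 'I_n)%type -> Prop :=
  fun x y => match x, y with
             | inl _, inr _ => True
             | inr _, inl _ => True
             | _, _ => False
             end.

Definition circ_adj (N : nat) (S : int -> Prop) (i j : 'I_N) : Prop :=
  exists s, S s /\
    (((i%:Z - j%:Z) = s %[mod N%:Z])%Z \/ ((i%:Z - j%:Z) = - s %[mod N%:Z])%Z).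

Definition is_circulant (V : finType) (E : V -> V -> Prop) : Prop :=
  exists (N : nat) (S : int -> Prop), (0 < N)%N /\
    exists f : V -> 'I_N, bijective f /\
      forall x y, E x y <-> circ_adj S (f x) (f y).

From mathcomp Require Import all_boot all_order all_algebra.
From mathcomp Require Import zify ring.
Import GRing.Theory Num.Theory.

(* Number the vertex (p, x) of K_{n,n} (x) C_M S, with p the i-th vertex of part
   b, by f x + M (2 i + c) in Z/2nM, the bit c chosen so that the number has
   parity b (possible since M is odd).  The number is f x mod M, so two vertices
   are adjacent iff the difference of their numbers is odd and is +-s mod M for
   some s in S.  The set T of such integers is symmetric and, as 2 and M divide
   2nM, periodic mod 2nM: hence the product is C_{2nM} T. *)

Set Implicit Arguments. Unset Strict Implicit. Unset Printing Implicit Defensive.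
Local Open Scope ring_scope.

Lemma eqz_modN (N x y : int) : (x = y %[mod N])%Z -> (- x = - y %[mod N])%Z.
Proof. by move=> Exy; rewrite -modzNm Exy modzNm. Qed.

Lemma eqz_mod_dvdl (m N x y : int) :
  (m %| N)%Z -> (x = y %[mod N])%Z -> (x = y %[mod m])%Z.
Proof.
move=> mN /eqP; rewrite eqz_mod_dvd => /(dvdz_trans mN).
by rewrite -eqz_mod_dvd => /eqP.
Qed.

Definition circ_diff (N : nat) (S : int -> Prop) (d : int) : Prop :=
  exists s, S s /\ ((d = s %[mod N%:Z])%Z \/ (d = - s %[mod N%:Z])%Z).

Lemma circ_adjE N S (i j : 'I_N) : circ_adj S i j <-> circ_diff N S (i%:Z - j%:Z).
Proof. by []. Qed.

Lemma circ_diff_mod N S (d d' : int) :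
  (d = d' %[mod N%:Z])%Z -> circ_diff N S d <-> circ_diff N S d'.
Proof. by rewrite /circ_diff => ->. Qed.

Lemma circ_diffN N S (d : int) : circ_diff N S (- d) <-> circ_diff N S d.
Proof.
suff imp e : circ_diff N S (- e) -> circ_diff N S e.
  by split; [exact: imp | have := imp (- d); rewrite opprK].
move=> [s [Ss Es]]; exists s; split=> //.
by case: Es => /eqz_modN; rewrite !opprK; [right | left].
Qed.

Lemma circ_diffE N (T : int -> Prop) :
  (forall t, T t -> T (- t)) ->
  (forall t t', (t = t' %[mod N%:Z])%Z -> T t -> T t') ->
  forall d, circ_diff N T d <-> T d.
Proof.
move=> TN Tmod d; split=> [[t [Tt [Edt | Edt]]] | Td]; last by exists d; split=> //; left.
- exact: Tmod (esym Edt) Tt.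
- exact: Tmod (esym Edt) (TN t Tt).
Qed.

Definition odd_circ_diff (M : nat) (S : int -> Prop) (t : int) : Prop :=
  ~~ (2 %| t)%Z /\ circ_diff M S t.

Lemma circ_diff_odd M N S (d : int) : (2 %| N)%N -> (M %| N)%N ->
  circ_diff N (odd_circ_diff M S) d <-> odd_circ_diff M S d.
Proof.
move=> twoN MN; apply: circ_diffE => [t [t_odd St] | t t' Ett' [t_odd St]].
  by split; [rewrite rpredN | apply/circ_diffN].
have twoNz : (2 %| N%:Z)%Z by rewrite dvdzE.
have MNz : (M%:Z %| N%:Z)%Z by rewrite dvdzE.
split; last exact: (circ_diff_mod S (eqz_mod_dvdl MNz Ett')).1.
apply: contra t_odd => /dvdz_mod0P t'0; apply/dvdz_mod0P.
by rewrite (eqz_mod_dvdl twoNz Ett').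
Qed.

Definition side (A B : Type) (p : A + B) : bool := if p is inr _ then true else false.

Definition sum_val (n : nat) (p : 'I_n + 'I_n) : 'I_n := match p with inl i | inr i => i end.

Lemma Knn_side n (p q : 'I_n + 'I_n) : Knn p q <-> side p != side q.
Proof. by case: p => i; case: q => j. Qed.

Lemma sum_ord_inj n (p q : 'I_n + 'I_n) :
  side p = side q -> sum_val p = sum_val q -> p = q.
Proof. by case: p => i; case: q => j //= _ ->. Qed.

Lemma dvdz2_subn (k l : nat) : (2 %| k%:Z - l%:Z)%Z = (odd k == odd l).
Proof. by rewrite -eqz_mod_dvd !modz_nat !modn2 eqz_nat; case: odd; case: odd. Qed.

Section TensorLabel.
Variables (n M : nat) (V : finType) (f : V -> 'I_M).

Definition tensor_label (q : ('I_n + 'I_n) * V) : nat :=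
  f q.2 + M * (2 * sum_val q.1 + (side q.1 (+) odd (f q.2))).

Lemma tensor_label_lt q : (tensor_label q < M * (2 * n))%N.
Proof.
rewrite /tensor_label.
have := ltn_ord (f q.2); have := ltn_ord (sum_val q.1).
case: (_ (+) _) => /=; nia.
Qed.

Lemma tensor_label_modM q : (tensor_label q %% M)%N = f q.2.
Proof. by rewrite /tensor_label addnC mulnC modnMDl modn_small. Qed.

Lemma odd_tensor_label q : odd M -> odd (tensor_label q) = side q.1.
Proof.
move=> M_odd; rewrite /tensor_label oddD oddM M_odd oddD oddM /= oddb.
by case: (side _); case: (odd _).
Qed.

Lemma tensor_label_inj : injective f -> injective tensor_label.
Proof.
move=> f_inj [p1 x1] [p2 x2] E12.
have Ef : f x2 = f x1.
  by have := tensor_label_modM (p1, x1); rewrite E12 tensor_label_modM => /val_inj.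
have M_gt0 : (0 < M)%N by apply: leq_ltn_trans (ltn_ord (f x1)).
move: E12; rewrite /tensor_label /= Ef => /addnI/eqP.
rewrite eqn_pmul2l // => /eqP Ej.
have Eb : side p1 (+) odd (f x1) = side p2 (+) odd (f x1).
  by have := congr1 odd Ej; rewrite !(oddD (2 * _)) !oddM /= !oddb.
rewrite -(f_inj _ _ Ef) (sum_ord_inj (addIb Eb)) //.
by apply: val_inj; move: Ej; rewrite Eb => /addIn/eqP; rewrite eqn_mul2l => /eqP.
Qed.

Lemma tensor_label_subz_mod q1 q2 :
  ((tensor_label q1)%:Z - (tensor_label q2)%:Z = (f q1.2)%:Z - (f q2.2)%:Z %[mod M%:Z])%Z.
Proof.
suff E (a b c d : int) : a + M%:Z * c - (b + M%:Z * d) = (c - d) * M%:Z + (a - b).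
  by rewrite /tensor_label !PoszD !PoszM E modzMDl.
by ring.
Qed.

Lemma odd_circ_diff_tensor_label S q1 q2 : odd M ->
  odd_circ_diff M S ((tensor_label q1)%:Z - (tensor_label q2)%:Z) <->
  Knn q1.1 q2.1 /\ circ_diff M S ((f q1.2)%:Z - (f q2.2)%:Z).
Proof.
move=> M_odd; rewrite /odd_circ_diff dvdz2_subn !odd_tensor_label // Knn_side.
by rewrite (circ_diff_mod S (tensor_label_subz_mod q1 q2)).
Qed.

Definition tensor_ord q : 'I_(M * (2 * n)) := Ordinal (tensor_label_lt q).

Lemma tensor_ord_bij : bijective f -> bijective tensor_ord.
Proof.
move=> f_bij; apply: inj_card_bij => [q1 q2 /(congr1 val) |].
  exact: tensor_label_inj (bij_inj f_bij) q1 q2.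
by rewrite card_ord card_prod card_sum card_ord (bij_eq_card f_bij) card_ord mulnC mul2n addnn.
Qed.

End TensorLabel.

Theorem theorem8 (V : finType) (E : V -> V -> Prop) (n : nat) :
  odd #|V| -> (0 < n)%N -> is_circulant E ->
  is_circulant (tensor (@Knn n) E).
Proof.
move=> V_odd n_gt0 [M [S [M_gt0 [f [f_bij Ef]]]]].
rewrite (bij_eq_card f_bij) card_ord in V_odd.
exists (M * (2 * n))%N, (odd_circ_diff M S); split; first by rewrite !muln_gt0 M_gt0 n_gt0.
exists (tensor_ord f); split; first exact: tensor_ord_bij.
have twoN : (2 %| M * (2 * n))%N by rewrite mulnCA dvdn_mulr.
move=> q1 q2; rewrite circ_adjE (circ_diff_odd _ _ twoN (dvdn_mulr _ (dvdnn M))).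
by rewrite odd_circ_diff_tensor_label // /tensor -circ_adjE -Ef.
Qed.
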